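(* Let $\beta_1,\beta_2,\gamma,\rho_1,\rho_2>0$, let $\sigma_1,\sigma_2>0$ with $\sigma_1+\sigma_2=1$, let $\alpha_2\ge 0$, $\alpha_3>0$, and let $0\le u_{\max}<1$. For a point $(s,e,i,j)$ with $s,e,i,j>0$ define \[ \begin{aligned} F(s,e,i,j)=\Bigl\{z=(z_1,\dots,z_5):\ & z_1=-s\bigl(\beta_1(1-u)^2 i+\beta_2(1-u)j\bigr),\\ & z_2=s\bigl(\beta_1(1-u)^2 i+\beta_2(1-u)j\bigr)-\gamma e,\\ & z_3=\sigma_1\gamma e-\rho_1 i,\quad z_4=\sigma_2\gamma e-\rho_2 j,\\ & z_5\ge \alpha_2(e+i+j)+0.5\alpha_3u^2,\ \text{for some } u\in[0,u_{\max}]\Bigr\}\subset\mathbb{R}^5 . \end{aligned} \] Then $F(s,e,i,j)$ is a convex set for every point $(s,e,i,j)$ with positive coordinates. *)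

From HB Require Import structures.
From mathcomp Require Import all_boot all_order all_algebra.
From mathcomp Require Import reals.
Set Implicit Arguments. Unset Strict Implicit. Unset Printing Implicit Defensive.
Import Order.TTheory GRing.Theory Num.Theory.
Local Open Scope ring_scope.

(* The set F(s,e,i,j) subset of R^5, with z = (z_1..z_5) indexed 0..4. *)
Definition Fset (R : realType)
  (beta1 beta2 gamma rho1 rho2 sigma1 sigma2 alpha2 alpha3 umax : R)
  (s e i j : R) (z : 'rV[R]_5) : Prop :=
  exists u : R, 0 <= u /\ u <= umax /\
    z ord0 (inord 0) = - (s * (beta1 * (1 - u) ^+ 2 * i + beta2 * (1 - u) * j)) /\
    z ord0 (inord 1) = s * (beta1 * (1 - u) ^+ 2 * i + beta2 * (1 - u) * j) - gamma * e /\
    z ord0 (inord 2) = sigma1 * gamma * e - rho1 * i /\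
    z ord0 (inord 3) = sigma2 * gamma * e - rho2 * j /\
    z ord0 (inord 4) >= alpha2 * (e + i + j) + 2%:R^-1 * alpha3 * u ^+ 2.

Definition convex_set (R : realType) (n : nat) (A : 'rV[R]_n -> Prop) : Prop :=
  forall (x y : 'rV[R]_n) (t : R), A x -> A y -> 0 <= t -> t <= 1 ->
    A (t *: x + (1 - t) *: y).

From HB Require Import structures.
From mathcomp Require Import all_boot all_order all_algebra.
From mathcomp Require Import reals.
From mathcomp Require Import ring lra.
Set Implicit Arguments. Unset Strict Implicit. Unset Printing Implicit Defensive.
Import Order.TTheory GRing.Theory Num.Theory.
Local Open Scope ring_scope.

(* Writing v = 1 - u, the first two coordinates of a point of F are
   -s phi(v) and s phi(v) - gamma e with phi(v) = beta1 i v^2 + beta2 j v,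
   the next two do not depend on u, and the last one is bounded below by a
   constant plus a nonnegative multiple of u^2.  Since phi is increasing and
   convex on [0, oo), the convex combination of the values phi(v1), phi(v2)
   is phi(v) for some v >= 0 lying above the combination of v1 and v2; the
   corresponding control u = 1 - v is therefore below the combination of u1
   and u2, and the convexity of u |-> u^2 takes care of the last coordinate. *)

Lemma sqr_convex (R : realFieldType) (x y t : R) : 0 <= t -> t <= 1 ->
  (t * x + (1 - t) * y) ^+ 2 <= t * x ^+ 2 + (1 - t) * y ^+ 2.
Proof.
move=> t_ge0 t_le1; rewrite -subr_ge0.
have -> : t * x ^+ 2 + (1 - t) * y ^+ 2 - (t * x + (1 - t) * y) ^+ 2
    = t * (1 - t) * (x - y) ^+ 2 by ring.
by rewrite mulr_ge0 ?sqr_ge0 ?mulr_ge0 ?subr_ge0.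
Qed.

Section QuadraticControl.
Variables (R : rcfType) (a b : R).

Definition quadr (v : R) : R := a * v ^+ 2 + b * v.

Lemma quadr_convex (x y t : R) : 0 <= a -> 0 <= t -> t <= 1 ->
  quadr (t * x + (1 - t) * y) <= t * quadr x + (1 - t) * quadr y.
Proof.
move=> a_ge0 t_ge0 t_le1; have := ler_wpM2l a_ge0 (sqr_convex x y t_ge0 t_le1).
rewrite /quadr; lra.
Qed.

Hypotheses (a_gt0 : 0 < a) (b_ge0 : 0 <= b).

Lemma quadr_ge0 (v : R) : 0 <= v -> 0 <= quadr v.
Proof. by move=> v_ge0; rewrite addr_ge0 ?mulr_ge0 ?exprn_ge0 // ltW. Qed.

Lemma quadr_ltr (p q : R) : 0 <= p -> p < q -> quadr p < quadr q.
Proof.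
move=> p_ge0 lt_pq; rewrite -subr_gt0.
have -> : quadr q - quadr p = (q - p) * (a * (q + p) + b) by rewrite /quadr; ring.
by rewrite mulr_gt0 ?subr_gt0 ?ltr_wpDr ?mulr_gt0 // ltr_wpDr // (le_lt_trans p_ge0).
Qed.

Lemma quadr_ler (p q : R) : 0 <= p -> 0 <= q -> (quadr p <= quadr q) = (p <= q).
Proof.
move=> p_ge0 q_ge0; apply: (le_mono_in (D := [pred x | 0 <= x])) => //.
by move=> x y x_ge0 _; apply: quadr_ltr.
Qed.

(* Witness from the quadratic formula. *)
Lemma quadr_surj (c : R) : 0 <= c -> exists2 v, 0 <= v & quadr v = c.
Proof.
move=> c_ge0; set S := Num.sqrt (b ^+ 2 + 4%:R * a * c).
have ac_ge0 : 0 <= 4%:R * a * c by rewrite !mulr_ge0 // ltW.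
have S2 : S ^+ 2 = b ^+ 2 + 4%:R * a * c by rewrite sqr_sqrtr ?addr_ge0 ?sqr_ge0.
have b_le_S : b <= S.
  by rewrite -(ger0_norm b_ge0) -sqrtr_sqr ler_sqrt ?lerDl ?addr_ge0 ?sqr_ge0.
exists ((S - b) / (2%:R * a)); first by rewrite divr_ge0 ?subr_ge0 ?mulr_ge0 // ltW.
have -> : quadr ((S - b) / (2%:R * a)) = (S ^+ 2 - b ^+ 2) / (4%:R * a).
  by rewrite /quadr; field; apply: lt0r_neq0.
by rewrite S2; field; apply: lt0r_neq0.
Qed.

Lemma quadr_preimage_convex_comb (v1 v2 h t : R) :
  0 <= v1 -> 0 <= v2 -> v1 <= h -> v2 <= h -> 0 <= t -> t <= 1 ->
  exists v, [/\ t * v1 + (1 - t) * v2 <= v, v <= h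
              & quadr v = t * quadr v1 + (1 - t) * quadr v2].
Proof.
move=> v1_ge0 v2_ge0 v1_le v2_le t_ge0 t_le1.
have h_ge0 : 0 <= h by apply: le_trans v1_le.
have w_ge0 : 0 <= t * v1 + (1 - t) * v2 by nra.
have q1_ge0 := quadr_ge0 v1_ge0.
have q2_ge0 := quadr_ge0 v2_ge0.
have [|v v_ge0 qv] := @quadr_surj (t * quadr v1 + (1 - t) * quadr v2); first nra.
exists v; split=> //.
- by rewrite -quadr_ler // qv quadr_convex // ltW.
- have q1_le : quadr v1 <= quadr h by rewrite quadr_ler.
  have q2_le : quadr v2 <= quadr h by rewrite quadr_ler.
  by rewrite -quadr_ler // qv; nra.
Qed.

Lemma quadr_control_convex_comb (umax u1 u2 t : R) : umax <= 1 ->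
  0 <= u1 -> u1 <= umax -> 0 <= u2 -> u2 <= umax -> 0 <= t -> t <= 1 ->
  exists u, [/\ 0 <= u, u <= umax,
    quadr (1 - u) = t * quadr (1 - u1) + (1 - t) * quadr (1 - u2)
    & u ^+ 2 <= t * u1 ^+ 2 + (1 - t) * u2 ^+ 2].
Proof.
move=> umax_le1 u1_ge0 u1_le u2_ge0 u2_le t_ge0 t_le1.
have [||||v [w_le_v v_le1 qv]] :=
  @quadr_preimage_convex_comb (1 - u1) (1 - u2) 1 t _ _ _ _ t_ge0 t_le1; try lra.
have u_le_comb : 1 - v <= t * u1 + (1 - t) * u2 by lra.
exists (1 - v); split; first by rewrite subr_ge0.
- nra.
- by rewrite subKr.
- apply: le_trans (sqr_convex u1 u2 t_ge0 t_le1).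
  by rewrite ler_sqr ?nnegrE ?subr_ge0 //; nra.
Qed.

End QuadraticControl.

Theorem lemma2 (R : realType)
  (beta1 beta2 gamma rho1 rho2 sigma1 sigma2 alpha2 alpha3 umax : R)
  (hb1 : 0 < beta1) (hb2 : 0 < beta2) (hg : 0 < gamma)
  (hr1 : 0 < rho1) (hr2 : 0 < rho2)
  (hs1 : 0 < sigma1) (hs2 : 0 < sigma2) (hs : sigma1 + sigma2 = 1)
  (ha2 : 0 <= alpha2) (ha3 : 0 < alpha3)
  (hu0 : 0 <= umax) (hu1 : umax < 1) :
  forall s e i j : R, 0 < s -> 0 < e -> 0 < i -> 0 < j ->
    convex_set (Fset beta1 beta2 gamma rho1 rho2 sigma1 sigma2 alpha2 alpha3 umax s e i j).
Proof.
move=> s e i j _ _ hi hj x y t [u1 [u1_ge0 [u1_le [x0 [x1 [x2 [x3 x4]]]]]]]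
  [u2 [u2_ge0 [u2_le [y0 [y1 [y2 [y3 y4]]]]]]] t_ge0 t_le1.
have quadrE u : beta1 * (1 - u) ^+ 2 * i + beta2 * (1 - u) * j
    = quadr (beta1 * i) (beta2 * j) (1 - u) by rewrite /quadr; ring.
rewrite !quadrE in x0 x1 y0 y1.
have [u [u_ge0 u_le qu usq_le]] :=
  quadr_control_convex_comb (mulr_gt0 hb1 hi) (ltW (mulr_gt0 hb2 hj)) (ltW hu1)
    u1_ge0 u1_le u2_ge0 u2_le t_ge0 t_le1.
exists u; do 2!(split; first by []).
rewrite !mxE x0 x1 x2 x3 y0 y1 y2 y3 quadrE qu.
do 4!(split; first by lra).
have K_ge0 : 0 <= 2%:R^-1 * alpha3 by rewrite mulr_ge0 ?invr_ge0 ?ler0n ?ltW.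
rewrite /= in x4 y4 *; nra.
Qed.
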